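(* Let $T$ be an open cone in $V$ with basepoint $b\in T$. For each $x\in\partial T\setminus[0]_T$, the set $A_T(x)$ is closed in the topology of pointwise convergence of functions on $T$ (relative to the set of Funk horofunctions of $T$): if $g_n\in A_T(x)$ converge pointwise to a Funk horofunction $g$, then $g\in A_T(x)$.
   Context: $V$ is a finite-dimensional real vector space. An open cone is a nonempty open convex set $T\subset V$ with $\lambda T\subseteq T$ for all $\lambda>0$ and $0\notin T$; $\partial T$ its boundary. Write $x\le_T y$ iff $y-x\in\overline T$, $[0]_T:=\overline T\cap(-\overline T)$. $M_T(y/x):=\inf\{\lambda>0:y\le_T\lambda x\}$, $F_T(y,x):=\log M_T(y/x)$. A sequence $(x_n)$ in $T$ converges in the Funk sense to $g$ if $F_T(\cdot,x_n)-F_T(b,x_n)\to g$ pointwise on $T$; a Funk horofunction is such a limit not of the form $F_T(\cdot,p)-F_T(b,p)$, $p\in T$. $A_T(x)$ is the set of Funk horofunctions that are Funk-sense limits of sequences in $T$ converging to $x$ in the usual topology of $V$. *)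

From HB Require Import structures.
From mathcomp Require Import all_boot all_order all_algebra.
From mathcomp Require Import all_classical all_reals.
From mathcomp Require Import topology normedtype sequences exp.
Set Implicit Arguments. Unset Strict Implicit. Unset Printing Implicit Defensive.
Import Order.TTheory GRing.Theory Num.Theory.
Import numFieldNormedType.Exports.
Local Open Scope classical_set_scope.
Local Open Scope ring_scope.

Section FunkDefs.
Variables (R : realType) (n : nat).
Notation V := 'rV[R]_n.

Definition convex_set (T : set V) : Prop :=
  forall x y t, T x -> T y -> 0 <= t <= 1 -> T (t *: x + (1 - t) *: y).

Definition open_cone (T : set V) : Prop :=
  [/\ T !=set0, open T, convex_set T,
      (forall l x, 0 < l -> T x -> T (l *: x)) & ~ T 0].

Definition cone_boundary (T : set V) : set V := closure T `\` interior T.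

Definition cone_le (T : set V) (x y : V) : Prop := closure T (y - x).

Definition cone_zero (T : set V) : set V :=
  closure T `&` [set v | closure T (- v)].

Definition funkM (T : set V) (y x : V) : R :=
  inf [set l : R | 0 < l /\ cone_le T y (l *: x)].

Definition funkF (T : set V) (y x : V) : R := ln (funkM T y x).

Definition funk_conv (T : set V) (b : V) (xs : nat -> V) (g : V -> R) : Prop :=
  (forall k, T (xs k)) /\
  forall y, T y -> (fun k => funkF T y (xs k) - funkF T b (xs k)) @ \oo --> g y.

Definition funk_horofunction (T : set V) (b : V) (g : V -> R) : Prop :=
  (exists xs, funk_conv T b xs g) /\
  ~ (exists p, T p /\ forall y, T y -> g y = funkF T y p - funkF T b p).

Definition funk_A (T : set V) (b : V) (x : V) : set (V -> R) :=
  [set g | funk_horofunction T b g /\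
           exists xs, funk_conv T b xs g /\ xs @ \oo --> x].

End FunkDefs.

From HB Require Import structures.
From mathcomp Require Import all_boot all_order all_algebra.
From mathcomp Require Import all_classical all_reals.
From mathcomp Require Import topology normedtype sequences exp.
From mathcomp Require Import interval_inference ring lra.
Import Order.TTheory GRing.Theory Num.Theory.
Import numFieldNormedType.Exports.
Local Open Scope classical_set_scope.
Local Open Scope ring_scope.
Set Implicit Arguments. Unset Strict Implicit.

(** Each [g_k] is the Funk limit of a sequence [X_k] converging to [x]. Choose
    [m_k] so that [X_k(m_k)] is within [1/(k+1)] of [x] and its Funk function
    [F(., X_k(m_k)) - F(b, X_k(m_k))] is within [1/(k+1)] of [g_k] at the first
    [k] points of a countable dense subset of [V]. Then [z_k := X_k(m_k)] tends
    to [x] and its Funk functions tend to [g] on the dense set. Funk functions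
    and their limits (such as [g]) satisfy [h y - h y' <= F(y, y')], and both
    [F(y, q)] and [F(q, y)] are small for [q] near [y] in [T], so the
    convergence extends to all of [T]. *)

Lemma divD1_mulr_lt (R : numFieldType) (e a : R) : 0 < e -> 0 <= a -> e / (a + 1) * a < e.
Proof.
move=> e0 a0; have a1 : 0 < a + 1 by rewrite ltr_pwDr.
rewrite mulrAC -mulrA gtr_pMr // ltr_pdivrMr // mul1r ltrDl //.
Qed.

Section OpenCone.
Variables (R : realType) (n : nat) (T : set 'rV[R]_n).
Hypothesis oc : open_cone T.

Lemma open_cone_ball y :
  T y -> exists2 e : R, 0 < e & forall v, `|v| < e -> T (y + v).
Proof.
case: oc => _ oT _ _ _ Ty.
have : open_nbhs y T by split.
rewrite open_nbhsE => -[_] /nbhs_ballP[e /= e0 sub]; exists e => // v hv.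
by apply: sub; rewrite -ball_normE /= opprD addrA subrr add0r normrN.
Qed.

Lemma open_coneZ l a : 0 < l -> T a -> T (l *: a).
Proof. by case: oc => _ _ _ sT _; apply: sT. Qed.

Lemma open_coneD a b : T a -> T b -> T (a + b).
Proof.
case: oc => _ _ cT _ _ Ta Tb.
have half1 : (1 - 2^-1 : R) = 2^-1 by rewrite {1}(splitr 1) mul1r addrK.
have -> : a + b = 2 *: (2^-1 *: a + (1 - 2^-1) *: b).
  by rewrite half1 -scalerDr scalerA divff ?pnatr_eq0 // scale1r.
apply: open_coneZ => //; apply: cT => //.
by rewrite invr_ge0 ler0n /= invf_le1 // ler1n.
Qed.

Definition preserves_cone (v : 'rV[R]_n) := forall t, T t -> T (v + t).

Lemma preserves_cone_of v : T v -> preserves_cone v.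
Proof. by move=> Tv t Tt; apply: open_coneD. Qed.

Lemma preserves_coneD u v :
  preserves_cone u -> preserves_cone v -> preserves_cone (u + v).
Proof. by move=> hu hv t Tt; rewrite -addrA; apply/hu/hv. Qed.

Lemma preserves_coneZ l u : 0 < l -> preserves_cone u -> preserves_cone (l *: u).
Proof.
move=> l0 hu t Tt.
have -> : l *: u + t = l *: (u + l^-1 *: t).
  by rewrite scalerDr scalerA divff ?gt_eqF // scale1r.
by apply/open_coneZ/hu/open_coneZ; rewrite ?invr_gt0.
Qed.

Lemma closure_open_coneE : closure T = preserves_cone.
Proof.
apply/funext => v; apply/propext; split.
- move=> clv t Tt; have [e e0 be] := open_cone_ball Tt.
  have [w [Tw]] : T `&` ball v e !=set0 by apply: clv; apply: nbhsx_ballx.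
  rewrite -ball_normE /= => hw.
  have -> : v + t = w + (t + (v - w)) by rewrite addrCA (addrC w) subrK addrC.
  exact/open_coneD/be.
- move=> hv B /nbhs_ballP[e /= e0 sub].
  have [[t0 Tt0] _ _ _ _] := oc.
  pose d := e / (`|t0| + 1).
  have d0 : 0 < d by rewrite divr_gt0 // ltr_pwDr.
  exists (v + d *: t0); split; first exact/hv/open_coneZ.
  apply: sub; rewrite -ball_normE /= opprD addrA subrr add0r normrN normrZ.
  by rewrite gtr0_norm // divD1_mulr_lt.
Qed.

Lemma funkME y z :
  funkM T y z = inf [set l | 0 < l /\ preserves_cone (l *: z - y)].
Proof. by rewrite /funkM /cone_le closure_open_coneE. Qed.

Lemma funkM_set_nonempty y z : T y -> T z ->
  exists l, 0 < l /\ preserves_cone (l *: z - y).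
Proof.
move=> Ty Tz; have [e e0 be] := open_cone_ball Tz.
pose d := e / (`|y| + 1).
have d0 : 0 < d by rewrite divr_gt0 // ltr_pwDr.
have Tu : T (z + - (d *: y)).
  by apply: be; rewrite normrN normrZ gtr0_norm // divD1_mulr_lt.
exists d^-1; split; first by rewrite invr_gt0.
have -> : d^-1 *: z - y = d^-1 *: (z + - (d *: y)).
  by rewrite scalerDr scalerN scalerA mulVf ?gt_eqF // scale1r.
by apply/preserves_cone_of/open_coneZ; rewrite ?invr_gt0.
Qed.

(** If [l] were tiny, [y - l z] would lie in [T] and [l z - y] would move it
    to [0], which is not in [T]. *)
Lemma funkM_set_lbound y z : T y -> T z ->
  exists2 d, 0 < d & forall l, 0 < l /\ preserves_cone (l *: z - y) -> d < l.
Proof.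
move=> Ty Tz; have [e e0 be] := open_cone_ball Ty.
pose d := e / (`|z| + 1).
have d0 : 0 < d by rewrite divr_gt0 // ltr_pwDr.
exists d => // l [l0 c]; rewrite ltNge; apply/negP => ld.
have Tu : T (y + - (l *: z)).
  apply: be; rewrite normrN normrZ gtr0_norm //.
  by apply: le_lt_trans (divD1_mulr_lt e0 (normr_ge0 z)); rewrite ler_wpM2r.
have := c _ Tu; rewrite addrA subrK subrr.
by case: oc.
Qed.

Lemma funkM_gt0 y z : T y -> T z -> 0 < funkM T y z.
Proof.
move=> Ty Tz; rewrite funkME.
have [d d0 hd] := funkM_set_lbound Ty Tz.
apply: (lt_le_trans d0); apply: lb_le_inf => [|l /hd /ltW //].
by have [l hl] := funkM_set_nonempty Ty Tz; exists l.
Qed.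

Lemma funkM_le y z l : 0 < l -> preserves_cone (l *: z - y) -> funkM T y z <= l.
Proof.
move=> l0 c; rewrite funkME; apply: ge_inf; last by split.
by exists 0 => m [m0 _]; apply: ltW.
Qed.

Lemma funkM_submul y y' z : T y -> T y' -> T z ->
  funkM T y z <= funkM T y y' * funkM T y' z.
Proof.
move=> Ty Ty' Tz.
have M1 := funkM_gt0 Ty Ty'.
have key a c : 0 < a /\ preserves_cone (a *: y' - y) ->
    0 < c /\ preserves_cone (c *: z - y') -> funkM T y z <= a * c.
  move=> [a0 ca] [c0 cc]; apply: funkM_le; first exact: mulr_gt0.
  have -> : (a * c) *: z - y = a *: (c *: z - y') + (a *: y' - y).
    by rewrite scalerBr scalerA addrA subrK.
  exact: preserves_coneD (preserves_coneZ a0 cc) ca.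
rewrite mulrC -(ler_pdivrMr _ _ M1).
rewrite [X in _ <= X]funkME; apply: lb_le_inf.
  by have [l hl] := funkM_set_nonempty Ty' Tz; exists l.
move=> c hc; have c0 : 0 < c by case: hc.
rewrite (ler_pdivrMr _ _ M1) mulrC -(ler_pdivrMr _ _ c0).
rewrite [X in _ <= X]funkME; apply: lb_le_inf.
  by have [l hl] := funkM_set_nonempty Ty Ty'; exists l.
move=> a ha; rewrite (ler_pdivrMr _ _ c0); exact: key.
Qed.

Lemma funkF_triangle y y' z : T y -> T y' -> T z ->
  funkF T y z <= funkF T y y' + funkF T y' z.
Proof.
move=> Ty Ty' Tz; rewrite /funkF -lnM ?posrE ?funkM_gt0 //.
by rewrite ler_ln ?posrE ?mulr_gt0 ?funkM_gt0 // funkM_submul.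
Qed.

Lemma funkF_le_ln y z l : T y -> T z -> 0 < l ->
  preserves_cone (l *: z - y) -> funkF T y z <= ln l.
Proof.
move=> Ty Tz l0 c; rewrite /funkF ler_ln ?posrE ?funkM_gt0 //.
exact: funkM_le.
Qed.

(** Both witnesses are [eps] times a point of the ball around [y] given by
    openness, and [ln (1 + eps) <= eps]. *)
Lemma funkF_near_le y eps : T y -> 0 < eps ->
  exists2 r, 0 < r & forall q, `|q - y| < r ->
    [/\ T q, funkF T y q <= eps & funkF T q y <= eps].
Proof.
move=> Ty e0; have [e ee0 be] := open_cone_ball Ty.
have l0 : 0 < 1 + eps by rewrite addr_gt0.
have c0 : 0 < (1 + eps) / eps by rewrite divr_gt0.
exists (eps * e / (1 + eps)); first by rewrite !mulr_gt0 ?invr_gt0.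
move=> q hq.
have hq1 : (1 + eps) / eps * `|q - y| < e.
  rewrite mulrC -(ltr_pdivlMr _ _ c0).
  suff -> : e / ((1 + eps) / eps) = eps * e / (1 + eps) by [].
  by field; rewrite !gt_eqF.
have c1 : 1 <= (1 + eps) / eps by rewrite ler_pdivlMr // mul1r; lra.
have Tq : T q.
  rewrite -(subrK y q) addrC; apply: be; apply: le_lt_trans hq1.
  by rewrite ler_peMl.
have lnb : ln (1 + eps) <= eps by apply: le_ln1Dx; lra.
split => //; apply: le_trans lnb; apply: funkF_le_ln => //.
- have -> : (1 + eps) *: q - y = eps *: (y + ((1 + eps) / eps) *: (q - y)).
    by apply/rowP => j; rewrite !mxE; field; rewrite gt_eqF.
  apply/preserves_coneZ/preserves_cone_of/be => //.
  by rewrite normrZ gtr0_norm.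
- have -> : (1 + eps) *: y - q = eps *: (y + eps^-1 *: (y - q)).
    by apply/rowP => j; rewrite !mxE; field; rewrite gt_eqF.
  apply/preserves_coneZ/preserves_cone_of/be => //.
  rewrite normrZ gtr0_norm ?invr_gt0 // distrC.
  apply: le_lt_trans hq1; rewrite ler_wpM2r // ler_pdivlMr // mulVf ?gt_eqF //.
  lra.
Qed.

Lemma funk_conv_limit_le b xs h y y' : funk_conv T b xs h -> T y -> T y' ->
  h y - h y' <= funkF T y y'.
Proof.
move=> [Txs hc] Ty Ty'.
have H : (fun k => (funkF T y (xs k) - funkF T b (xs k)) -
    (funkF T y' (xs k) - funkF T b (xs k))) @ \oo --> h y - h y'.
  exact: cvgB (hc _ Ty) (hc _ Ty').
rewrite -(cvg_lim _ H) //; apply: limr_le; first exact: cvgP H.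
apply: nearW => k /=.
by rewrite opprB addrA subrK lerBlDr funkF_triangle.
Qed.

End OpenCone.

Lemma mx_norm_lt (R : realType) n (v : 'rV[R]_n) e :
  0 < e -> (forall j, `|v ord0 j| < e) -> `|v| < e.
Proof.
move=> e0 h; change (mx_norm v < e); rewrite mx_normrE.
by apply/bigmax_ltP; split => // -[i j] _ /=; rewrite (ord1 i).
Qed.

(** Enumerates the rational row vectors [w / (N + 1)]; indices outside the
    range of [pickle] give the junk value [0]. *)
Definition rat_row (R : realType) (n : nat) (j : nat) : 'rV[R]_n :=
  match unpickle (s := ('rV[int]_n * nat)%type) j with
  | Some (w, N) => (N.+1%:R)^-1 *: map_mx (fun z : int => z%:~R) w
  | None => 0
  end.

Lemma rat_row_dense (R : realType) n (y : 'rV[R]_n) e :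
  0 < e -> exists j, `|rat_row R n j - y| < e.
Proof.
move=> e0; pose N := Num.truncn (e^-1).
have N0 : 0 < (N.+1%:R : R) by rewrite ltr0n.
have eN : N.+1%:R^-1 < e.
  by rewrite -(invrK e) ltf_pV2 ?posrE ?invr_gt0 ?truncnS_gt.
pose w : 'rV[int]_n := \row_k Num.floor (y ord0 k * N.+1%:R).
exists (pickle (w, N)); rewrite /rat_row pickleK.
apply: mx_norm_lt => // k; rewrite !mxE.
set a := y ord0 k * N.+1%:R.
have fl := floor_le a.
have fS := floorD1_gt a; rewrite intrD in fS.
have -> : N.+1%:R^-1 * (Num.floor a)%:~R - y ord0 k =
    - (N.+1%:R^-1 * (a - (Num.floor a)%:~R)).
  by rewrite /a; field; rewrite addrC natr1 pnatr_eq0.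
rewrite normrN ger0_norm; last by rewrite mulr_ge0 ?invr_ge0 ?subr_ge0 // ltW.
apply: le_lt_trans eN; rewrite -[leRHS]mulr1 ler_wpM2l ?invr_ge0 ?ltW //.
move: fS; rewrite (_ : 1%:~R = 1) //; lra.
Qed.

Lemma diagonal_subsequence (R : realType) (U : normedModType R)
    (X : nat -> nat -> U) (x : U) (u : nat -> nat -> nat -> R)
    (c : nat -> nat -> R) (P : nat -> Prop) :
  (forall k, X k @ \oo --> x) ->
  (forall k j, P j -> u k j @ \oo --> c k j) ->
  exists m : nat -> nat, forall k, `|x - X k (m k)| < k.+1%:R^-1 /\
    forall j, (j <= k)%N -> P j -> `|c k j - u k j (m k)| < k.+1%:R^-1.
Proof.
move=> hX hu.
suff /choice[m hm] : forall k, exists m, `|x - X k m| < k.+1%:R^-1 /\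
    forall j, (j <= k)%N -> P j -> `|c k j - u k j m| < k.+1%:R^-1 by exists m.
move=> k.
have ek : 0 < k.+1%:R^-1 :> R by rewrite invr_gt0 ltr0n.
have near_j (j : 'I_k.+1) :
    \forall m \near \oo, P j -> `|c k j - u k j m| < k.+1%:R^-1.
  have [Pj|nPj] := pselect (P j); last by apply: nearW.
  by move/cvgrPdist_lt: (hu k j Pj) => /(_ _ ek); apply: filterS.
have near_all : \forall m \near \oo, `|x - X k m| < k.+1%:R^-1 /\
    forall j, (j <= k)%N -> P j -> `|c k j - u k j m| < k.+1%:R^-1.
  near=> m; split; first by near: m; move/cvgrPdist_lt: (hX k); apply.
  move=> j jk; suff /(_ (Ordinal (jk : j < k.+1)%N)) : forall j : 'I_k.+1,
    P j -> `|c k j - u k j m| < k.+1%:R^-1 by [].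
  by near: m; apply: filter_forall.
exact: filter_ex near_all.
Unshelve. all: by end_near.
Qed.

Lemma cvg_close (R : realType) (U : normedModType R) (a c : nat -> U) (l : U) :
  c @ \oo --> l -> (\forall k \near \oo, `|c k - a k| < k.+1%:R^-1) ->
  a @ \oo --> l.
Proof.
move=> /cvgrPdist_lt hc hca; apply/cvgrPdist_lt => e e0.
have e20 : 0 < e / 2 by rewrite divr_gt0.
have small_inv : \forall k \near \oo, k.+1%:R^-1 < e / 2.
  by have := near_infty_natSinv_lt (PosNum e20).
near=> k.
have lc : `|l - c k| < e / 2 by near: k; exact: hc.
have ca : `|c k - a k| < e / 2.
  apply: lt_trans (_ : k.+1%:R^-1 < e / 2); first by near: k.
  by near: k; exact: small_inv.
rewrite -(subrK (c k) l) -addrA (splitr e).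
exact: le_lt_trans (ler_normD _ _) (ltrD lc ca).
Unshelve. all: by end_near.
Qed.

Lemma three_eps_bound (R : realFieldType) (gy gq Fyz Fqz Fbz Fyq Fqy e : R) :
  gy - gq <= Fyq -> gq - gy <= Fqy -> Fyq <= e -> Fqy <= e ->
  Fyz <= Fyq + Fqz -> Fqz <= Fqy + Fyz ->
  - (gq - (Fqz - Fbz)) < e -> gq - (Fqz - Fbz) < e ->
  `|gy - (Fyz - Fbz)| < 3 * e.
Proof. by move=> *; rewrite ltr_norml; apply/andP; split; lra. Qed.

Lemma funk_conv_dense (R : realType) (n : nat) (T : set 'rV[R]_n) b
    (q : nat -> 'rV[R]_n) (zs : nat -> 'rV[R]_n) (g : 'rV[R]_n -> R) :
  open_cone T ->
  (forall y e, 0 < e -> exists j, `|q j - y| < e) ->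
  (forall k, T (zs k)) ->
  (forall j, T (q j) ->
    (fun k => funkF T (q j) (zs k) - funkF T b (zs k)) @ \oo --> g (q j)) ->
  (forall y y', T y -> T y' -> g y - g y' <= funkF T y y') ->
  funk_conv T b zs g.
Proof.
move=> oc dense Tz hq glip; split => // y Ty.
apply/cvgrPdist_lt => eps eps0.
have e0 : 0 < eps / 3 by rewrite divr_gt0.
have [r r0 hr] := funkF_near_le oc Ty e0.
have [j hj] := dense y r r0.
have [Tq Fyq Fqy] := hr _ hj.
have gyq := glip _ _ Ty Tq; have gqy := glip _ _ Tq Ty.
move/cvgrPdist_lt: (hq j Tq) => /(_ _ e0).
apply: filterS => k /ltr_normlP[lo hi].
have t1 := funkF_triangle oc Ty Tq (Tz k).
have t2 := funkF_triangle oc Tq Ty (Tz k).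
rewrite -[X in _ < X](@divfK _ 3) ?pnatr_eq0 // mulrC.
exact: three_eps_bound gyq gqy Fyq Fqy t1 t2 lo hi.
Qed.

Theorem mainTheorem18 (R : realType) (n : nat) (T : set 'rV[R]_n)
  (b x : 'rV[R]_n) (gs : nat -> ('rV[R]_n -> R)) (g : 'rV[R]_n -> R) :
  open_cone T -> T b ->
  cone_boundary T x -> ~ cone_zero T x ->
  (forall k, funk_A T b x (gs k)) ->
  (forall y, T y -> (fun k => gs k y) @ \oo --> g y) ->
  funk_horofunction T b g ->
  funk_A T b x g.
Proof.
move=> oc _ _ _ hgs hg hhoro; split => //.
have [xs hxs] := hhoro.1.
have [X hX] := choice (fun k => (hgs k).2).
pose q := rat_row R n.
have [m hm] := diagonal_subsequence (fun k => (hX k).2)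
  (u := fun k j m => funkF T (q j) (X k m) - funkF T b (X k m))
  (c := fun k j => gs k (q j)) (P := fun j => T (q j))
  (fun k j Tq => (hX k).1.2 _ Tq).
exists (fun k => X k (m k)); split.
- apply: (funk_conv_dense oc (@rat_row_dense R n)) => [k|j Tq|].
  + exact: (hX k).1.1.
  + apply: cvg_close (hg _ Tq) _; near=> k; apply: (hm k).2 => //.
    by near: k; exact: nbhs_infty_ge.
  + by move=> y y'; apply: funk_conv_limit_le hxs.
- by apply: cvg_close (cvg_cst x) _; apply: nearW => k; exact: (hm k).1.
Unshelve. all: by end_near.
Qed.
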